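(* Let $G$ be a compact Lie group with Lie algebra $\mathfrak g$ and bi-invariant metric $h_0$, and let $h$ be a left-invariant metric on $G$ with nonnegative sectional curvature. Then the unique inverse-linear path from $h_0$ to $h$ is infinitesimally nonnegative.
   Context: Write $\langle Z_1,Z_2\rangle=h_0(Z_1,Z_2)$ and $|Z|^2=\langle Z,Z\rangle$ for $Z_1,Z_2,Z\in\mathfrak g$. Every left-invariant metric $h$ on $G$ is determined by its restriction to $\mathfrak g$, and there is a unique $h_0$-self-adjoint positive definite endomorphism $\Phi\colon\mathfrak g\to\mathfrak g$ (the matrix of $h$) with $h(X,Y)=\langle \Phi X,Y\rangle$ for $X,Y\in\mathfrak g$. An inverse-linear path is a family $\Phi_t=(I-t\Psi)^{-1}$, where $\Psi\colon\mathfrak g\to\mathfrak g$ is $h_0$-self-adjoint; $h_t$ denotes the left-invariant metric with matrix $\Phi_t$, defined for $t$ in the open interval containing $0$ on which $I-t\Psi$ is positive definite. The unique inverse-linear path from $h_0$ to $h$ is the one with $\Phi_1=\Phi$, i.e. $\Psi=I-\Phi^{-1}$. For a left-invariant metric $h$ and $Z_1,Z_2\in\mathfrak g$, the unnormalized sectional curvature $k_h(Z_1,Z_2)=h(R_h(Z_1,Z_2)Z_2,Z_1)$ (not divided by $|Z_1\wedge Z_2|^2$); for $h_0$ it equals $\tfrac14|[Z_1,Z_2]|^2$. For fixed $X,Y\in\mathfrak g$, define $\kappa^\Psi(t)=k_{h_t}(\Phi_t^{-1}X,\Phi_t^{-1}Y)$ on the domain of $h_t$. The path (or $\Psi$) is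 infinitesimally nonnegative if for every $X,Y\in\mathfrak g$ there is $\varepsilon>0$ such that the associated function satisfies $\kappa^\Psi(t)\ge 0$ for all $t\in[0,\varepsilon)$. *)

From HB Require Import structures.
From mathcomp Require Import all_boot all_order all_algebra.
From mathcomp Require Import reals.
Set Implicit Arguments. Unset Strict Implicit. Unset Printing Implicit Defensive.
Import Order.TTheory GRing.Theory Num.Theory.
Local Open Scope ring_scope.

Section LieDefs.
Variables (R : realType) (n : nat).

(* The Lie algebra g is identified with column vectors 'cV[R]_n via an
   h_0-orthonormal basis, so h_0 is the standard inner product. *)
Definition ip (u v : 'cV[R]_n) : R := (u^T *m v) 0 0.

Definition is_lie_bracket (br : 'cV[R]_n -> 'cV[R]_n -> 'cV[R]_n) : Prop :=
  (forall a x y z, br (a *: x + y) z = a *: br x z + br y z) /\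
  (forall a x y z, br x (a *: y + z) = a *: br x y + br x z) /\
  (forall x, br x x = 0) /\
  (forall x y z, br x (br y z) + br y (br z x) + br z (br x y) = 0).

(* h_0 is ad-invariant (infinitesimal version of bi-invariance) *)
Definition ad_invariant (br : 'cV[R]_n -> 'cV[R]_n -> 'cV[R]_n) : Prop :=
  forall x y z, ip (br x y) z + ip y (br x z) = 0.

Definition self_adjoint (M : 'M[R]_n) : Prop := M^T = M.
Definition pos_def (M : 'M[R]_n) : Prop :=
  self_adjoint M /\ forall x : 'cV[R]_n, x != 0 -> 0 < ip x (M *m x).

Definition adm (br : 'cV[R]_n -> 'cV[R]_n -> 'cV[R]_n) (y : 'cV[R]_n) : 'M[R]_n :=
  \matrix_(i, j) (br y (delta_mx j 0)) i 0.

(* Levi-Civita connection of the left-invariant metric with matrix Phi on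
   left-invariant fields (Koszul formula):
   2 h(nabla_X Y, Z) = h([X,Y],Z) - h([Y,Z],X) + h([Z,X],Y). *)
Definition lc_nabla br (Phi : 'M[R]_n) (x y : 'cV[R]_n) : 'cV[R]_n :=
  (2%:R^-1) *: (invmx Phi *m
     (Phi *m br x y - (adm br y)^T *m (Phi *m x) - (adm br x)^T *m (Phi *m y))).

Definition curv br Phi (x y z : 'cV[R]_n) : 'cV[R]_n :=
  lc_nabla br Phi x (lc_nabla br Phi y z) - lc_nabla br Phi y (lc_nabla br Phi x z)
  - lc_nabla br Phi (br x y) z.

Definition sec_k br Phi (x y : 'cV[R]_n) : R := ip (Phi *m curv br Phi x y y) x.

Definition nonneg_sec br Phi : Prop := forall x y, 0 <= sec_k br Phi x y.

Definition il_path (Psi : 'M[R]_n) (t : R) : 'M[R]_n := invmx (1%:M - t *: Psi).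

Definition kappa br (Psi : 'M[R]_n) (x y : 'cV[R]_n) (t : R) : R :=
  sec_k br (il_path Psi t) ((1%:M - t *: Psi) *m x) ((1%:M - t *: Psi) *m y).

(* infinitesimally nonnegative: for all X Y there is eps > 0 such that for
   t in [0, eps), t lies in the domain of h_t and kappa(t) >= 0 *)
Definition inf_nonneg br (Psi : 'M[R]_n) : Prop :=
  forall x y : 'cV[R]_n, exists eps : R, 0 < eps /\
    forall t : R, 0 <= t -> t < eps ->
      pos_def (1%:M - t *: Psi) /\ 0 <= kappa br Psi x y t.

End LieDefs.

From HB Require Import structures.
From mathcomp Require Import all_boot all_order all_algebra.
From mathcomp Require Import reals ring lra.
Import Order.TTheory GRing.Theory Num.Theory.
Local Open Scope ring_scope.
Set Implicit Arguments. Unset Strict Implicit. Unset Printing Implicit Defensive.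

(** The metric [h_t] of the inverse-linear path has matrix [A_t^-1] with
    [A_t = (1 - t) I + t B], [B = Phi^-1].  For a left-invariant metric with
    matrix [Phi], the unnormalized curvature [k(U, V)] is a polynomial
    expression in [Phi^-1], [U], [V], [Phi U], [Phi V], minus
    [3/4 <Phi [U,V], [U,V]>].  For [U = A_t x], [V = A_t y] the polynomial
    part is cubic in [(1 - t, t)], and writing [[A_t x, A_t y] = A_t (t q - (1 - t) s)]
    makes the last term polynomial too.  The result is the identity
      [kappa(t) = t^3 k_h(Bx, By) + (1-t)^3/4 |[x,y]|^2
                  + 3/4 t (1-t) ((1-t) <s, B s> + t |B s|^2)],
    whose terms are all nonnegative for [t] in [[0, 1]]. *)

Section InnerProduct.
Variables (R : realType) (n : nat).
Implicit Types (u v w : 'cV[R]_n) (M : 'M[R]_n).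

Lemma ipE u v : ip u v = \sum_i u i 0 * v i 0.
Proof. by rewrite /ip !mxE; apply: eq_bigr => i _; rewrite mxE. Qed.

Lemma ipC u v : ip u v = ip v u.
Proof. by rewrite !ipE; apply: eq_bigr => i _; rewrite mulrC. Qed.

Lemma ipDl u v w : ip (u + v) w = ip u w + ip v w.
Proof. by rewrite !ipE -big_split; apply: eq_bigr => i _; rewrite mxE mulrDl. Qed.

Lemma ipZl a u v : ip (a *: u) v = a * ip u v.
Proof. by rewrite !ipE mulr_sumr; apply: eq_bigr => i _; rewrite mxE mulrA. Qed.

Lemma ipNl u v : ip (- u) v = - ip u v.
Proof. by rewrite -scaleN1r ipZl mulN1r. Qed.

Lemma ipBl u v w : ip (u - v) w = ip u w - ip v w.
Proof. by rewrite ipDl ipNl. Qed.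

Lemma ip0l v : ip 0 v = 0.
Proof. by rewrite -(scale0r 0) ipZl mul0r. Qed.

Lemma ipDr u v w : ip w (u + v) = ip w u + ip w v.
Proof. by rewrite ipC ipDl ![ip _ w]ipC. Qed.

Lemma ipZr a u v : ip v (a *: u) = a * ip v u.
Proof. by rewrite ipC ipZl ipC. Qed.

Lemma ipNr u v : ip v (- u) = - ip v u.
Proof. by rewrite ipC ipNl ipC. Qed.

Lemma ipBr u v w : ip w (u - v) = ip w u - ip w v.
Proof. by rewrite ipDr ipNr. Qed.

Lemma ip0r v : ip v 0 = 0.
Proof. by rewrite ipC ip0l. Qed.

Lemma ip_mull M u v : ip (M *m u) v = ip u (M^T *m v).
Proof. by rewrite /ip trmx_mul mulmxA. Qed.

Lemma ip_sym_mulr M u v : M^T = M -> ip u (M *m v) = ip v (M *m u).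
Proof. by move=> sM; rewrite ipC ip_mull sM. Qed.

Lemma ip_delta i v : ip (delta_mx i 0) v = v i 0.
Proof. by rewrite /ip trmx_delta -rowE mxE. Qed.

Lemma ip_inj u v : (forall z, ip u z = ip v z) -> u = v.
Proof.
by move=> uv; apply/matrixP => i j; rewrite (ord1 j) -!ip_delta ipC uv ipC.
Qed.

Lemma ip_ge0 u : 0 <= ip u u.
Proof. by rewrite ipE sumr_ge0 // => i _; rewrite -expr2 sqr_ge0. Qed.

Lemma ip_gt0 u : u != 0 -> 0 < ip u u.
Proof.
move=> u_neq0; rewrite lt_def ip_ge0 andbT; apply: contra u_neq0.
have u2_ge0 (i : 'I_n) : true -> 0 <= u i 0 * u i 0.
  by move=> _; rewrite -expr2 sqr_ge0.
rewrite ipE => /eqP/(psumr_eq0P u2_ge0) u2_eq0; apply/eqP/matrixP => i j.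
have /eqP := u2_eq0 i isT; rewrite (ord1 j) mulf_eq0 orbb mxE => /eqP-> //.
Qed.

Lemma pos_def_unitmx M : pos_def M -> M \in unitmx.
Proof.
move=> [sM M_pos]; rewrite unitmxE unitfE; apply/negP => /det0P [v v_neq0 vM].
have := M_pos v^T; rewrite trmx_eq0 => /(_ v_neq0).
by rewrite -sM -trmx_mul vM trmx0 ip0r ltxx.
Qed.

Lemma pos_def_ip_ge0 M u : pos_def M -> 0 <= ip u (M *m u).
Proof.
by move=> [_ M_pos]; have [->|/M_pos/ltW//] := eqVneq u 0; rewrite mulmx0 ip0r.
Qed.

Lemma pos_def_invmx M : pos_def M -> pos_def (invmx M).
Proof.
move=> M_pd; have M_unit := pos_def_unitmx M_pd; have [sM M_pos] := M_pd.
split=> [|v v_neq0]; first by rewrite /self_adjoint trmx_inv sM.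
rewrite -{1}(mulKVmx M_unit v) ip_mull sM; apply: M_pos.
by apply: contra v_neq0 => /eqP Mv0; rewrite -(mulKVmx M_unit v) Mv0 mulmx0.
Qed.

Lemma pos_def_pencil (B : 'M[R]_n) (t : R) :
  pos_def B -> 0 <= t <= 1 -> pos_def (1%:M - t *: (1%:M - B)).
Proof.
move=> B_pd /andP[t_ge0 t_le1]; have [sB B_pos] := B_pd.
split=> [|v v_neq0].
  by rewrite /self_adjoint linearB /= trmx1 linearZ /= linearB /= trmx1 sB.
rewrite mulmxBl mul1mx -scalemxAl mulmxBl mul1mx !(ipBr, ipZr).
have vv_gt0 := ip_gt0 v_neq0; have vBv_gt0 := B_pos v v_neq0.
have [->|t_neq1] := eqVneq t 1; first lra.
have : 0 < (1 - t) * ip v v by rewrite mulr_gt0 // subr_gt0 lt_neqAle t_neq1.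
have : 0 <= t * ip v (B *m v) by rewrite mulr_ge0 // ltW.
lra.
Qed.

End InnerProduct.

(* Orient all occurrences of [ip u v] and [ip v u] (resp. [ip u (M *m v)] and
   [ip v (M *m u)] for a symmetric [M]) the same way, so that [ring] sees a
   single atom. *)
Ltac ip_sym_normalize :=
  repeat match goal with
  | |- context [ip ?u ?v] =>
    lazymatch goal with
    | |- context [ip v u] => assert_fails (constr_eq u v); rewrite [ip v u]ipC
    end
  end.

Ltac ip_mx_sym_normalize sM :=
  repeat match goal with
  | |- context [ip ?u (?M *m ?v)] =>
    lazymatch goal with
    | |- context [ip v (M *m u)] =>
      assert_fails (constr_eq u v); rewrite [ip v (M *m u)](ip_sym_mulr _ _ sM)
    end
  end.

Section LieAlgebra.
Variables (R : realType) (n : nat) (br : 'cV[R]_n -> 'cV[R]_n -> 'cV[R]_n).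
Hypotheses (br_lie : is_lie_bracket br) (br_inv : ad_invariant br).
Implicit Types (x y z u v w : 'cV[R]_n).

Lemma brDl x y z : br (x + y) z = br x z + br y z.
Proof. by have [brl _] := br_lie; have := brl 1 x y z; rewrite !scale1r. Qed.

Lemma brDr x y z : br z (x + y) = br z x + br z y.
Proof. by have [_ [brr _]] := br_lie; have := brr 1 z x y; rewrite !scale1r. Qed.

Lemma br0l z : br 0 z = 0.
Proof. by apply: (@addrI _ (br 0 z)); rewrite -brDl !addr0. Qed.

Lemma br0r z : br z 0 = 0.
Proof. by apply: (@addrI _ (br z 0)); rewrite -brDr !addr0. Qed.

Lemma brZl a x z : br (a *: x) z = a *: br x z.
Proof. by have [brl _] := br_lie; have := brl a x 0 z; rewrite !addr0 br0l addr0. Qed.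

Lemma brZr a x z : br z (a *: x) = a *: br z x.
Proof. by have [_ [brr _]] := br_lie; have := brr a z x 0; rewrite !addr0 br0r addr0. Qed.

Lemma brNl x z : br (- x) z = - br x z.
Proof. by rewrite -scaleN1r brZl scaleN1r. Qed.

Lemma brNr x z : br z (- x) = - br z x.
Proof. by rewrite -scaleN1r brZr scaleN1r. Qed.

Lemma brBl x y z : br (x - y) z = br x z - br y z.
Proof. by rewrite brDl brNl. Qed.

Lemma brBr x y z : br z (x - y) = br z x - br z y.
Proof. by rewrite brDr brNr. Qed.

Lemma brxx x : br x x = 0.
Proof. by have [_ [_ []]] := br_lie. Qed.

Lemma brC x y : br y x = - br x y.
Proof.
apply/eqP; rewrite -addr_eq0 addrC.
by have := brxx (x + y); rewrite brDl !brDr !brxx add0r addr0 => ->.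
Qed.

Lemma ip_brr x y z : ip (br x y) z = - ip y (br x z).
Proof. by apply/eqP; rewrite -addr_eq0; apply/eqP/br_inv. Qed.

Lemma ip_brl x y z : ip (br x y) z = ip x (br y z).
Proof. by rewrite brC ipNl ip_brr opprK. Qed.

Lemma ip_br_jacobi x y u v :
  ip (br x y) (br u v) = ip (br v y) (br u x) - ip (br u y) (br v x).
Proof.
have [_ [_ [_ jacobi]]] := br_lie.
have := congr1 (ip u) (jacobi v x y).
rewrite ip0r !ipDr -!(ip_brl u) [br y v]brC ipNr.
by rewrite [ip (br u v) _]ipC [ip (br u x) _]ipC; lra.
Qed.

Lemma adm_trmx_mul y z : (adm br y)^T *m z = - br y z.
Proof.
apply/matrixP => i j; rewrite (ord1 j) !mxE -(ip_delta i (br y z)) ipC ip_brr.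
by rewrite opprK ipE; apply: eq_bigr => k _; rewrite !mxE mulrC.
Qed.

Definition curv_poly (M : 'M[R]_n) (U V X Y : 'cV[R]_n) : R :=
  - ip (br V Y) (M *m br U X)
  + 4^-1 * ip (br V X + br U Y) (M *m (br V X + br U Y))
  - 2^-1 * ip (br U V) (br V X - br U Y).

Section Metric.
Variable Phi : 'M[R]_n.
Hypotheses (Phi_sym : Phi^T = Phi) (Phi_unit : Phi \in unitmx).

Definition koszul x y := 2^-1 *: (Phi *m br x y + br y (Phi *m x) + br x (Phi *m y)).

Lemma mul_lc_nabla x y : Phi *m lc_nabla br Phi x y = koszul x y.
Proof. by rewrite /lc_nabla -scalemxAr mulKVmx // !adm_trmx_mul !opprK. Qed.

Lemma koszul_xx x : koszul x x = br x (Phi *m x).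
Proof.
rewrite /koszul brxx mulmx0 add0r -mulr2n -scaler_nat scalerA mulVf ?scale1r //.
by rewrite pnatr_eq0.
Qed.

Lemma ip_koszul_diag x y : ip (koszul x y) x = ip (br x y) (Phi *m x).
Proof.
rewrite /koszul ipZl !ipDl ip_mull Phi_sym [ip (br y _) _]ip_brr.
rewrite [ip (br x (Phi *m y)) _]ip_brr brxx ip0r [br y x]brC.
by rewrite ipNr opprK [ip (Phi *m x) _]ipC subr0; field.
Qed.

Lemma ip_koszulE_r x y z : ip (koszul y z) x = 2^-1 * (- ip z (br y (Phi *m x))
   + ip z (br (Phi *m y) x) + ip (Phi *m z) (br x y)).
Proof.
rewrite /koszul ipZl !ipDl ip_mull Phi_sym ip_brr [ip (br z _) _]ip_brl.
rewrite [ip (br y (Phi *m z)) _]ip_brr.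
by rewrite [br y x]brC ipNr opprK.
Qed.

Lemma ip_koszulE_l x y z : ip (koszul z y) x = 2^-1 * (ip z (br y (Phi *m x))
   + ip (Phi *m z) (br x y) - ip z (br x (Phi *m y))).
Proof.
rewrite /koszul ipZl !ipDl ip_mull Phi_sym ip_brl.
rewrite [ip (br y _) _]ip_brr [ip (br z (Phi *m y)) _]ip_brl.
by rewrite [br y x]brC [br (Phi *m y) x]brC !ipNr !opprK.
Qed.

Lemma sec_k_koszul x y : sec_k br Phi x y = ip (koszul x (lc_nabla br Phi y y)) x
  - ip (koszul y (lc_nabla br Phi x y)) x - ip (koszul (br x y) y) x.
Proof. by rewrite -!mul_lc_nabla /sec_k /curv 2!mulmxBr 2!ipBl. Qed.

Lemma sec_kE x y : sec_k br Phi x y =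
  curv_poly (invmx Phi) x y (Phi *m x) (Phi *m y) - 3 / 4 * ip (Phi *m br x y) (br x y).
Proof.
have nablaE u v : lc_nabla br Phi u v = invmx Phi *m koszul u v.
  by rewrite -mul_lc_nabla mulKmx.
have mulVK v : Phi *m (invmx Phi *m v) = v by rewrite mulKVmx.
have Msym : (invmx Phi)^T = invmx Phi by rewrite trmx_inv Phi_sym.
rewrite sec_k_koszul ip_koszul_diag (ip_koszulE_r x) (ip_koszulE_l x).
rewrite !nablaE koszul_xx !mulVK ip_brr !ip_mull Msym /curv_poly /koszul.
rewrite !(mulmxDr, mulmxN, ipZl, ipZr, ipDl, ipDr, ipNl, ipNr, ipBr, ipBl).
rewrite !ip_mull Phi_sym !mulVK [br (Phi *m y) x]brC !mulmxN !ipNr.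
ip_mx_sym_normalize Msym.
ip_sym_normalize.
by field.
Qed.

End Metric.

Lemma curv_poly_pencil (B M : 'M[R]_n) (c t : R) x y x' y' q w :
  B^T = B -> (forall v, M *m v = c *: v + t *: (B *m v)) ->
  w = t *: q - t *: (br x' y + br x y') - c *: br x y ->
  curv_poly M (c *: x + t *: x') (c *: y + t *: y') x y
    - 3 / 4 * t * ip q (br (c *: x + t *: x') (c *: y + t *: y'))
    + 3 / 4 * c * t * ip w q
  = t ^+ 3 * (curv_poly B x' y' x y - 3 / 4 * ip q (br x' y'))
    + 4^-1 * c ^+ 3 * ip (br x y) (br x y) + 3 / 4 * c * ip w w.
Proof.
move=> sB ME ->; rewrite /curv_poly !ME.
have mulmxZ a v : B *m (a *: v) = a *: (B *m v) by rewrite scalemxAr.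
rewrite !(brDl, brDr, brBl, brBr, brZl, brZr, brNl, brNr, brxx).
rewrite [br y x]brC [br x y']brC.
rewrite !(scaler0, addr0, add0r, mulmxDr, mulmxBr, mulmxN, mulmx0, mulmxZ, scalerN).
rewrite !(ipDl, ipDr, ipBl, ipBr, ipZl, ipZr, ipNl, ipNr, ip0l, ip0r).
rewrite ?[ip (br x' y') (br x y)]ipC ?[ip (br x y) (br x' y')]ip_br_jacobi.
ip_mx_sym_normalize sB.
ip_sym_normalize.
by field.
Qed.

Section InverseLinearPath.
Variable Phi : 'M[R]_n.
Hypothesis Phi_pd : pos_def Phi.
Local Notation B := (invmx Phi).

Lemma kappa_il_path_decomp x y t : 0 <= t <= 1 ->
  exists s, kappa br (1%:M - B) x y t =
    t ^+ 3 * sec_k br Phi (B *m x) (B *m y)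
    + 4^-1 * (1 - t) ^+ 3 * ip (br x y) (br x y)
    + 3 / 4 * (1 - t) * (t * ((1 - t) * ip s (B *m s) + t * ip (B *m s) (B *m s))).
Proof.
move=> t01; set c := 1 - t; set A := 1%:M - t *: (1%:M - B).
have B_pd := pos_def_invmx Phi_pd; have [sB _] := B_pd.
have [sPhi _] := Phi_pd; have Phi_unit := pos_def_unitmx Phi_pd.
have A_pd : pos_def A := pos_def_pencil B_pd t01.
have A_unit := pos_def_unitmx A_pd; have [sA _] := A_pd.
have AE (v : 'cV[R]_n) : A *m v = c *: v + t *: (B *m v).
  rewrite /A /c mulmxBl mul1mx -scalemxAl mulmxBl mul1mx scalerBr scalerBl scale1r.
  by rewrite opprB addrCA addrC.
set q := Phi *m br (B *m x) (B *m y).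
set w := t *: q - t *: (br (B *m x) y + br x (B *m y)) - c *: br x y.
(* [s] is chosen so that [[A x, A y] = A (t q - c s)], which makes the term
   [<A^-1 [A x, A y], [A x, A y]>] of [sec_kE] polynomial. *)
set s := invmx A *m w.
have As : A *m s = w by rewrite mulKVmx.
exists s.
have AC : br (A *m x) (A *m y) = A *m (t *: q - c *: s).
  rewrite mulmxBr -!scalemxAr As !AE /q /w mulKmx //.
  apply: ip_inj => z.
  rewrite !(brDl, brDr, brZl, brZr).
  by rewrite -/q !(ipDl, ipBl, ipNl, ipZl); ring.
have AinvC : invmx A *m br (A *m x) (A *m y) = t *: q - c *: s by rewrite AC mulKmx.
have sC : ip s (br (A *m x) (A *m y)) = t * ip w q - c * ip w s.
  by rewrite AC (ip_sym_mulr _ _ sA) As ipBl !ipZl ![ip _ w]ipC.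
have wBs : ip w w - c * ip w s = t * (c * ip s (B *m s) + t * ip (B *m s) (B *m s)).
  by rewrite -As AE !(ipDl, ipDr, ipZl, ipZr) [ip (B *m s) s]ipC; ring.
rewrite /kappa /il_path -/A.
have [sAinv Ainv_unit] : (invmx A)^T = invmx A /\ invmx A \in unitmx.
  by rewrite trmx_inv sA unitmx_inv.
rewrite (sec_kE sAinv Ainv_unit) invmxK !mulKmx // AinvC ipBl !ipZl sC !AE.
rewrite (sec_kE sPhi Phi_unit) !mulKVmx // -/q -/c -wBs.
have := curv_poly_pencil (x' := B *m x) (y' := B *m y) (q := q) sB AE (erefl w).
lra.
Qed.

Lemma kappa_il_path_ge0 x y t : nonneg_sec br Phi -> 0 <= t <= 1 ->
  0 <= kappa br (1%:M - B) x y t.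
Proof.
move=> Phi_sec /[dup] t01 /andP[t_ge0 t_le1].
have [s ->] := kappa_il_path_decomp x y t01.
have c_ge0 : 0 <= 1 - t by rewrite subr_ge0.
have k_ge0 := Phi_sec (B *m x) (B *m y).
have sBs_ge0 : 0 <= (1 - t) * ip s (B *m s) + t * ip (B *m s) (B *m s).
  have := pos_def_ip_ge0 s (pos_def_invmx Phi_pd); have := ip_ge0 (B *m s).
  by move=> *; apply: addr_ge0; apply: mulr_ge0.
have := ip_ge0 (br x y); have : 0 <= 3 / 4 :> R by rewrite divr_ge0 ?ler0n.
have : 0 <= 4^-1 :> R by rewrite invr_ge0 ler0n.
have := exprn_ge0 3 t_ge0; have := exprn_ge0 3 c_ge0.
move=> *; apply: addr_ge0; first apply: addr_ge0.
- exact: mulr_ge0.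
- by apply: mulr_ge0 => //; apply: mulr_ge0.
- by apply: mulr_ge0; apply: mulr_ge0.
Qed.

End InverseLinearPath.

End LieAlgebra.

Theorem mainTheorem1 (R : realType) (n : nat)
    (br : 'cV[R]_n -> 'cV[R]_n -> 'cV[R]_n) (Phi : 'M[R]_n) :
  is_lie_bracket br -> ad_invariant br ->
  pos_def Phi -> nonneg_sec br Phi ->
  inf_nonneg br (1%:M - invmx Phi).
Proof.
move=> br_lie br_inv Phi_pd Phi_sec x y; exists 1; split=> [|t t_ge0 t_lt1].
  exact: ltr01.
have t01 : 0 <= t <= 1 by rewrite t_ge0 ltW.
split; first exact: pos_def_pencil (pos_def_invmx Phi_pd) t01.
exact: kappa_il_path_ge0.
Qed.
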